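(* Let $G$ be a finite group. Then $G$ is a nested GVZ-group if and only if $U(G/N)>1$ for every proper normal subgroup $N$ of $G$.
   Context: All groups are finite. For $\chi\in\mathrm{Irr}(G)$, the center of $\chi$ is $Z(\chi)=\{g\in G : |\chi(g)|=\chi(1)\}$. A group is nested if for any two of its irreducible characters $\chi,\psi$ either $Z(\chi)\le Z(\psi)$ or $Z(\psi)\le Z(\chi)$. A group is a GVZ-group if every irreducible character vanishes on the complement of its center. For a group $H$ and a normal subgroup $M$ of $H$, $\mathrm{Irr}(H\mid M)$ is the set of $\chi\in\mathrm{Irr}(H)$ with $M\not\le\ker(\chi)$, and $V(H\mid M)$ is the subgroup generated by all $h\in H$ such that $\chi(h)\neq 0$ for some $\chi\in\mathrm{Irr}(H\mid M)$ (with $V(H\mid 1)=1$). For a normal subgroup $L$ of $H$, $U(H\mid L)$ is the product of all normal subgroups $M$ of $H$ with $V(H\mid M)\le L$, and $U(H)=U(H\mid Z(H))$. Here $U(G/N)$ is computed in the group $H=G/N$. *)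

From HB Require Import structures.
From mathcomp Require Import all_boot all_order all_algebra all_fingroup all_solvable all_field all_character.
Set Implicit Arguments. Unset Strict Implicit. Unset Printing Implicit Defensive.
Import Order.TTheory GRing.Theory Num.Theory.

Local Open Scope ring_scope.

Section Defs.
Variable gT : finGroupType.

Definition chi_center (H : {group gT}) (i : Iirr H) : {set gT} :=
  [set g in H | (`|'chi_i g| == 'chi_i 1%g)%R].

Definition nested (H : {group gT}) : Prop :=
  forall i j : Iirr H,
    (chi_center i \subset chi_center j) \/ (chi_center j \subset chi_center i).

Definition GVZ (H : {group gT}) : Prop :=
  forall (i : Iirr H) (g : gT), g \in H -> g \notin chi_center i -> ('chi_i g = 0)%R.

Definition in_Irr_rel (H M : {group gT}) (i : Iirr H) : bool :=
  ~~ (M \subset cfker 'chi_i).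

Definition V_rel (H M : {group gT}) : {set gT} :=
  (<<[set h in H | [exists i : Iirr H, in_Irr_rel M i && ('chi_i h != 0)%R]]>>)%g.

(* U(H | L) : product (= join) of all normal M of H with V(H|M) <= L *)
Definition U_rel (H : {group gT}) (L : {set gT}) : {set gT} :=
  (<< \bigcup_(M : {group gT} | (M <| H) && (V_rel H M \subset L)) M >>)%g.

Definition U_of (H : {group gT}) : {set gT} := U_rel H 'Z(H)%g.

End Defs.

From HB Require Import structures.
From mathcomp Require Import all_boot all_order all_algebra all_fingroup all_solvable all_field all_character.
Set Implicit Arguments. Unset Strict Implicit. Unset Printing Implicit Defensive.
Import Order.TTheory GRing.Theory Num.Theory.
Local Open Scope ring_scope.

(* Forward: nestedness and the GVZ property pass to quotients, so it suffices
   to show U(H) > 1 for a nontrivial nested GVZ-group H.  The support of every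
   chi is Z(chi).  If every Z(chi) lies in Z(H), then V(H | H) <= Z(H).
   Otherwise let Z(chi) be the smallest center not inside Z(H) and
   M = [Z(chi), H] > 1.  Since [Z(psi), H] <= ker psi, any psi in Irr(H | M)
   has Z(chi) not inside Z(psi), so by nestedness Z(psi) < Z(chi), whence
   Z(psi) <= Z(H) and V(H | M) <= Z(H).
   Backward: given chi, psi, put N = ker chi /\ ker psi and pick M > 1 in G/N
   with V(G/N | M) <= Z(G/N).  As M meets ker chi /\ ker psi trivially, one
   of chi, psi, say chi, lies in Irr(G/N | M); then the support of chi maps
   into Z(G/N), which lies in the centers of both chi and psi.  This gives
   nestedness, and with chi = psi the GVZ property. *)

Section CharacterCenters.
Variable gT : finGroupType.
Implicit Types (H M : {group gT}).

Lemma chi_centerE H (i : Iirr H) : chi_center i = 'Z('chi_i)%CF.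
Proof.
apply/setP=> x; rewrite inE; have [Hx | nHx] /= := boolP (x \in H).
  by rewrite irr_cfcenterE.
by apply/esym/negbTE; apply: contra nHx; apply/subsetP/cfcenter_sub.
Qed.

Lemma chi_center_sub H (i : Iirr H) : chi_center i \subset H.
Proof. by rewrite chi_centerE cfcenter_sub. Qed.

Lemma center_sub_chi_center H (i : Iirr H) : ('Z(H) \subset chi_center i)%g.
Proof. by rewrite chi_centerE -cap_cfcenter_irr (bigcap_inf i). Qed.

Lemma cfker_sub_chi_center H (i : Iirr H) : cfker 'chi_i \subset chi_center i.
Proof. by rewrite chi_centerE normal_sub ?cfker_center_normal. Qed.

Lemma commg_chi_center_sub_cfker H (i : Iirr H) :
  ([~: chi_center i, H] \subset cfker 'chi_i)%g.
Proof.
have nKH : (H \subset 'N(cfker 'chi_i))%g by rewrite normal_norm ?cfker_normal.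
rewrite -quotient_cents2 ?(subset_trans (chi_center_sub i)) // chi_centerE.
exact: subset_trans (cfcenter_subset_center _) (subsetIr _ _).
Qed.

Lemma chi_center_neq0 H (i : Iirr H) x : x \in chi_center i -> 'chi_i x != 0.
Proof.
rewrite inE => /andP[_ /eqP chi_x]; apply: contra_neq (irr1_neq0 i) => chi_x0.
by rewrite -chi_x chi_x0 normr0.
Qed.

Lemma GVZP H :
  GVZ H <-> (forall (i : Iirr H) h, h \in H -> 'chi_i h != 0 -> h \in chi_center i).
Proof.
split=> [GVZ_H i h Hh | supp_H i h Hh].
  by apply: contraR => /(GVZ_H i h Hh)->.
by apply: contraNeq => /(supp_H i h Hh).
Qed.

Lemma mem_V_rel H M (i : Iirr H) h :
  h \in H -> in_Irr_rel M i -> 'chi_i h != 0 -> h \in V_rel H M.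
Proof.
move=> Hh Mi chi_h; apply: mem_gen.
by rewrite inE Hh; apply/existsP; exists i; rewrite Mi.
Qed.

Lemma V_rel_sub H M (A : {group gT}) :
  (forall (i : Iirr H) h, in_Irr_rel M i -> h \in H -> 'chi_i h != 0 -> h \in A) ->
  V_rel H M \subset A.
Proof.
move=> suppA; rewrite gen_subG; apply/subsetP => h.
by rewrite inE => /andP[Hh /existsP[i /andP[Mi chi_h]]]; apply: suppA Mi Hh chi_h.
Qed.

Lemma U_of_neq1P H :
  (exists M : {group gT}, [/\ (M <| H)%g, (M :!=: 1)%g & V_rel H M \subset 'Z(H)%g])
  <-> (U_of H != 1)%g.
Proof.
split=> [[M [nsMH ntM sVZ]] | ntU].
  apply: contraNneq ntM => U1; apply/eqP/trivgP; rewrite -U1.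
  by rewrite sub_gen // (bigcup_sup M) // nsMH sVZ.
have [M /and3P[nsMH sVZ ntM] | noM] :=
  pickP [pred M : {group gT} | [&& M <| H, V_rel H M \subset 'Z(H) & M :!=: 1]%g].
  by exists M.
case/negP: ntU; apply/eqP/trivgP; rewrite gen_subG.
apply/bigcupsP => M /andP[nsMH sVZ].
by have := noM M; rewrite /= nsMH sVZ /= => /negbFE/eqP->.
Qed.

Lemma V_rel_commg_min_chi_center H (i : Iirr H) :
  nested H -> GVZ H ->
  (forall j : Iirr H,
     #|chi_center j| < #|chi_center i| -> chi_center j \subset 'Z(H)%g)%N ->
  V_rel H [~: chi_center i, H] \subset 'Z(H)%g.
Proof.
move=> nestH /GVZP suppH minZi; apply: V_rel_sub => j h Mj Hh chi_h.
have not_sub_ij : ~~ (chi_center i \subset chi_center j).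
  apply: contra Mj => sZij.
  exact: subset_trans (commSg _ sZij) (commg_chi_center_sub_cfker j).
have sZji : chi_center j \subset chi_center i.
  by case: (nestH i j) => // sZij; rewrite sZij in not_sub_ij.
have ltZji : chi_center j \proper chi_center i by rewrite properE sZji.
exact: subsetP (minZi j (proper_card ltZji)) h (suppH j h Hh chi_h).
Qed.

Lemma nested_GVZ_U_of_neq1 H :
  (H :!=: 1)%g -> nested H -> GVZ H -> (U_of H != 1)%g.
Proof.
move=> ntH nestH GVZ_H; apply/U_of_neq1P.
pose notZ (i : Iirr H) := ~~ (chi_center i \subset 'Z(H)%g).
have [i0 notZi0 | allZ] := pickP notZ; last first.
  exists H; split=> //; apply: V_rel_sub => i h _ Hh chi_h.
  by have /negbFE/subsetP := allZ i; apply; apply: (GVZP H).1.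
case: (arg_minnP (fun i => #|chi_center i|) notZi0) => i notZi minZi.
exists [group of [~: chi_center i, H]%g]; split=> /=.
- rewrite /normal commg_normr andbT chi_centerE commg_subr.
  exact: subset_trans (cfcenter_sub _) (normG H).
- apply: contra notZi => /eqP/commG1P cZH.
  by rewrite subsetI chi_center_sub.
- apply: V_rel_commg_min_chi_center => // j; apply: contraTT.
  by rewrite -leqNgt => /minZi.
Qed.

Lemma V_rel_center_sub_chi_center H M (i j : Iirr H) h :
  V_rel H M \subset 'Z(H)%g -> in_Irr_rel M i -> h \in H -> 'chi_i h != 0 ->
  h \in chi_center j.
Proof.
move=> sVZ Mi Hh chi_h.
exact: subsetP (center_sub_chi_center j) h (subsetP sVZ h (mem_V_rel Hh Mi chi_h)).
Qed.

End CharacterCenters.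

Section Quotients.
Variable gT : finGroupType.
Implicit Types (G N : {group gT}).

Lemma chi_center_mod G N (nsNG : (N <| G)%g) (i : Iirr (G / N)%G) x :
  x \in G -> (x \in chi_center (mod_Iirr i)) = (coset N x \in chi_center i).
Proof.
by move=> Gx; rewrite !inE Gx mem_quotient // mod_IirrE // cfModE // cfMod1.
Qed.

Lemma nested_quotient G N : (N <| G)%g -> nested G -> nested (G / N)%G.
Proof.
move=> nsNG nestG.
have modS (i j : Iirr (G / N)%G) :
    chi_center (mod_Iirr i) \subset chi_center (mod_Iirr j) ->
    chi_center i \subset chi_center j.
  move=> sZij; apply/subsetP => _ /[dup] /setIdP[/morphimP[x _ Gx ->] _].
  by rewrite -!(chi_center_mod nsNG) // => /(subsetP sZij).
by move=> i j; case: (nestG (mod_Iirr i) (mod_Iirr j)) => /modS; [left | right].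
Qed.

Lemma GVZ_quotient G N : (N <| G)%g -> GVZ G -> GVZ (G / N)%G.
Proof.
move=> nsNG GVZ_G i _ /morphimP[x _ Gx ->].
rewrite -(chi_center_mod nsNG) // => notZx.
by have := GVZ_G (mod_Iirr i) x Gx notZx; rewrite mod_IirrE // cfModE.
Qed.

Lemma support_sub_chi_center_quo G N (M : {group coset_of N}) (k l : Iirr G) g :
  (N <| G)%g -> V_rel (G / N)%G M \subset 'Z(G / N)%g ->
  N \subset cfker 'chi_k -> in_Irr_rel M (quo_Iirr N k) ->
  N \subset cfker 'chi_l -> g \in G -> 'chi_k g != 0 -> g \in chi_center l.
Proof.
move=> nsNG sVZ kerNk Mk kerNl Gg.
rewrite -(quo_IirrK nsNG kerNk) -(quo_IirrK nsNG kerNl) chi_center_mod //.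
rewrite mod_IirrE // cfModE // => chi_g.
exact: V_rel_center_sub_chi_center sVZ Mk (mem_quotient N Gg) chi_g.
Qed.

Lemma support_sub_chi_centers G (i j : Iirr G) :
  (forall N : {group gT}, (N <| G)%g -> N \proper G -> U_of (G / N)%G != 1%g) ->
  (forall g, g \in G -> 'chi_i g != 0 -> g \in chi_center i :&: chi_center j) \/
  (forall g, g \in G -> 'chi_j g != 0 -> g \in chi_center i :&: chi_center j).
Proof.
move=> ntU; pose N := [group of cfker 'chi_i :&: cfker 'chi_j].
have nsNG : (N <| G)%g by rewrite normalI ?cfker_normal.
have kerNi : N \subset cfker 'chi_i by rewrite subsetIl.
have kerNj : N \subset cfker 'chi_j by rewrite subsetIr.
have [ltNG | ] := boolP (N \proper G); last first.
  rewrite properE (normal_sub nsNG) /= negbK => sGN.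
  have sGZ (k : Iirr G) : N \subset cfker 'chi_k -> G \subset chi_center k.
    move=> kerNk; apply: subset_trans sGN _.
    exact: subset_trans kerNk (cfker_sub_chi_center k).
  left=> g Gg _.
  by rewrite inE (subsetP (sGZ i kerNi) g Gg) (subsetP (sGZ j kerNj) g Gg).
have [M [_ ntM sVZ]] := (U_of_neq1P _).2 (ntU N nsNG ltNG).
have : in_Irr_rel M (quo_Iirr N i) || in_Irr_rel M (quo_Iirr N j).
  rewrite -negb_and; apply: contra ntM => /andP[sMi sMj].
  have : M \subset cfker 'chi_(quo_Iirr N i) :&: cfker 'chi_(quo_Iirr N j).
    by rewrite subsetI sMi sMj.
  by rewrite !quo_IirrE // !cfker_quo // -quotientGI // trivg_quotient => /trivgP->.
by case/orP=> [Mi | Mj]; [left | right] => g Gg chi_g;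
  rewrite inE !(support_sub_chi_center_quo nsNG sVZ _ _ _ Gg chi_g).
Qed.

End Quotients.

Theorem theoremI (gT : finGroupType) (G : {group gT}) :
  (nested G /\ GVZ G) <->
  (forall N : {group gT}, (N <| G)%g -> N \proper G -> U_of (G / N)%G != 1%g).
Proof.
split=> [[nestG GVZ_G] N nsNG ltNG | ntU].
  apply: nested_GVZ_U_of_neq1; rewrite ?quotient_neq1 //.
    exact: nested_quotient.
  exact: GVZ_quotient.
split=> [i j | ].
  have mem_G k x : x \in chi_center k -> x \in G := subsetP (chi_center_sub k) x.
  by case: (support_sub_chi_centers i j ntU) => supp; [left | right];
    apply/subsetP => x Zx; have /setIP[] := supp x (mem_G _ x Zx) (chi_center_neq0 Zx).
apply/GVZP => i g Gg chi_g.
by case: (support_sub_chi_centers i i ntU) => /(_ g Gg chi_g); rewrite setIid.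
Qed.
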